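(* (Elimination of bisimulation quantifiers.) For every formula $\phi$ of Full Modal Team Logic $\mathcal{FMTL}$ and every letter $p$, there is a formula $\theta\in\mathcal{FMTL}$ equivalent to $\tilde\exists p\,\phi$, i.e. for every team model $(M,X)$: $(M,X)\models\theta$ iff there is a team model $(N,Y)$ with $(N,Y)\rightleftharpoons_{\mathcal L(\phi)\setminus\{p\}}(M,X)$ and $(N,Y)\models\phi$.
   Context: Kripke models $M=(W,R,V)$, $V:W\to\mathcal P(Prop)$; team models $(M,X)$, $X\subseteq W$. Formulas of $\mathcal{FMTL}$: $p,\neg p,\bot,NE,\wedge,\otimes,\vee,\Diamond,\Box$, with team semantics: $(M,X)\models p$ iff $p\in V(s)$ for all $s\in X$; $\neg p$ iff $p\notin V(s)$ for all $s\in X$; $\bot$ iff $X=\emptyset$; $NE$ iff $X\neq\emptyset$; $\wedge$ componentwise; $\vee$: one disjunct holds; $\otimes$: $X=X_1\cup X_2$ with $(M,X_i)\models\phi_i$; $\Diamond\phi$: $(M,Y)\models\phi$ for some $Y$ such that every $x\in X$ has an $R$-successor in $Y$ and every $y\in Y$ is a successor of some $x\in X$; $\Box\phi$: $(M,R[X])\models\phi$, $R[X]$ the set of successors of elements of $X$. $\mathcal L(\phi)$ is the set of letters in $\phi$. For a set $\mathcal P$ of letters, $(M,w)\rightleftharpoons_{\mathcal P}(N,v)$: some relation containing $(w,v)$ has all pairs agreeing on $\mathcal P$ and satisfying forth and back conditions; $(M,X)\rightleftharpoons_{\mathcal P}(N,Y)$: each $x\in X$ is $\mathcal P$-bisimilar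 to some $y\in Y$ and vice versa. *)

From Stdlib Require Import List.
Import ListNotations.

Definition letter := nat.

Record kmodel := KModel {
  world : Type;
  rel : world -> world -> Prop;
  val : world -> letter -> Prop
}.

Definition team (M : kmodel) := world M -> Prop.

Inductive form : Type :=
| FAtom : letter -> form
| FNAtom : letter -> form
| FBot : form
| FNE : form
| FAnd : form -> form -> form
| FTensor : form -> form -> form
| FOr : form -> form -> form
| FDia : form -> form
| FBox : form -> form.

Definition image (M : kmodel) (X : team M) : team M :=
  fun y => exists x, X x /\ rel M x y.

Fixpoint sat (M : kmodel) (X : team M) (phi : form) : Prop :=
  match phi with
  | FAtom p => forall s, X s -> val M s p
  | FNAtom p => forall s, X s -> ~ val M s p
  | FBot => forall s, ~ X s
  | FNE => exists s, X s
  | FAnd a b => sat M X a /\ sat M X b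
  | FTensor a b => exists X1 X2 : team M,
      (forall s, X s <-> (X1 s \/ X2 s)) /\ sat M X1 a /\ sat M X2 b
  | FOr a b => sat M X a \/ sat M X b
  | FDia a => exists Y : team M,
      (forall x, X x -> exists y, Y y /\ rel M x y) /\
      (forall y, Y y -> exists x, X x /\ rel M x y) /\
      sat M Y a
  | FBox a => sat M (image M X) a
  end.

Fixpoint letters (phi : form) : list letter :=
  match phi with
  | FAtom p | FNAtom p => [p]
  | FBot | FNE => []
  | FAnd a b | FTensor a b | FOr a b => letters a ++ letters b
  | FDia a | FBox a => letters a
  end.

Definition state_bisim (P : letter -> Prop) (M : kmodel) (w : world M)
    (N : kmodel) (v : world N) : Prop :=
  exists Z : world M -> world N -> Prop,
    Z w v /\
    forall a b, Z a b ->
      (forall q, P q -> (val M a q <-> val N b q)) /\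
      (forall a', rel M a a' -> exists b', rel N b b' /\ Z a' b') /\
      (forall b', rel N b b' -> exists a', rel M a a' /\ Z a' b').

Definition team_bisim (P : letter -> Prop) (M : kmodel) (X : team M)
    (N : kmodel) (Y : team N) : Prop :=
  (forall x, X x -> exists y, Y y /\ state_bisim P M x N y) /\
  (forall y, Y y -> exists x, X x /\ state_bisim P M x N y).

From Stdlib Require Import List Lia Classical PeanoNat.
Import ListNotations.

(* Let P be the letters of phi other than p, and d its modal depth.  Up to d-step
   P-bisimilarity a world is described by one of finitely many flat Hintikka formulas, so a
   team is described by the set T of Hintikka formulas it realizes, which FMTL expresses by
   team_type T = (x)_{t in T} (t /\ NE).  Take theta to be the disjunction of the team_type T
   over those T realized in some model of phi.  A model of the right-hand side satisfies
   theta by bisimulation invariance.  Conversely, if (M, X) realizes the same T as a model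
   (N, Y) of phi, the two teams are d-step P-bisimilar; the amalgam of M and N, which takes
   the P-letters from M and the other letters from N and follows both models for d steps,
   is then P-bisimilar to (M, X) and d-step bisimilar to (N, Y) for all letters, so it
   satisfies phi. *)

(* The Egli-Milner lifting of R.  team_bisim, the successor-team clause of FDia and the
   back-and-forth clause of a bisimulation are all convertible to instances of it. *)
Definition team_lift {A B : Type} (R : A -> B -> Prop) (X : A -> Prop) (Y : B -> Prop) :
    Prop :=
  (forall x, X x -> exists y, Y y /\ R x y) /\
  (forall y, Y y -> exists x, X x /\ R x y).

Section TeamLift.

Context {A B : Type}.
Implicit Types (R : A -> B -> Prop) (X : A -> Prop) (Y : B -> Prop).

Lemma team_lift_mono {R R' X Y} :
  (forall x y, R x y -> R' x y) -> team_lift R X Y -> team_lift R' X Y.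
Proof.
  intros HR [HX HY]; split.
  - intros x Hx; destruct (HX x Hx) as [y [Hy Hxy]]; eauto.
  - intros y Hy; destruct (HY y Hy) as [x [Hx Hxy]]; eauto.
Qed.

Lemma team_lift_flip {R X Y} :
  team_lift R X Y -> team_lift (fun y x => R x y) Y X.
Proof. intros [HX HY]; split; assumption. Qed.

Lemma team_lift_comp {C : Type} {R} {S : B -> C -> Prop} {X Y} {Z : C -> Prop} :
  team_lift R X Y -> team_lift S Y Z ->
  team_lift (fun x z => exists y, Y y /\ R x y /\ S y z) X Z.
Proof.
  intros [HX HY] [HY' HZ]; split.
  - intros x Hx. destruct (HX x Hx) as [y [Hy Hxy]].
    destruct (HY' y Hy) as [z [Hz Hyz]]. exists z; split; [|exists y]; auto.
  - intros z Hz. destruct (HZ z Hz) as [y [Hy Hyz]].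
    destruct (HY y Hy) as [x [Hx Hxy]]. exists x; split; [|exists y]; auto.
Qed.

Lemma team_lift_split {R X Y X1 X2} :
  team_lift R X Y -> (forall x, X x <-> X1 x \/ X2 x) ->
  exists Y1 Y2, (forall y, Y y <-> Y1 y \/ Y2 y) /\
    team_lift R X1 Y1 /\ team_lift R X2 Y2.
Proof.
  intros [HX HY] HX12.
  exists (fun y => Y y /\ exists x, X1 x /\ R x y),
         (fun y => Y y /\ exists x, X2 x /\ R x y).
  split; [|split; split].
  - intros y; split.
    + intros Hy. destruct (HY y Hy) as [x [Hx Hxy]].
      destruct (proj1 (HX12 x) Hx); [left|right]; eauto.
    + intros [[Hy _]|[Hy _]]; exact Hy.
  - intros x Hx. destruct (HX x (proj2 (HX12 x) (or_introl Hx))) as [y [Hy Hxy]].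
    exists y; split; [split|]; eauto.
  - intros y [_ [x [Hx Hxy]]]; eauto.
  - intros x Hx. destruct (HX x (proj2 (HX12 x) (or_intror Hx))) as [y [Hy Hxy]].
    exists y; split; [split|]; eauto.
  - intros y [_ [x [Hx Hxy]]]; eauto.
Qed.

End TeamLift.

Section Successors.

Context {M N : kmodel} {Z Z' : world M -> world N -> Prop}.
Hypothesis Hzigzag : forall x y, Z x y -> team_lift Z' (rel M x) (rel N y).

Lemma team_lift_successor_team {X X' : team M} {Y : team N} :
  team_lift Z X Y -> team_lift (rel M) X X' ->
  exists Y', team_lift (rel N) Y Y' /\ team_lift Z' X' Y'.
Proof.
  intros [HX HY] [HXX' HX'X].
  exists (fun b => (exists y, Y y /\ rel N y b) /\ exists a, X' a /\ Z' a b).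
  split; split.
  - intros y Hy. destruct (HY y Hy) as [x [Hx Hxy]].
    destruct (HXX' x Hx) as [a [Ha Hxa]].
    destruct (proj1 (Hzigzag x y Hxy) a Hxa) as [b [Hyb Hab]].
    exists b; split; [split|]; eauto.
  - intros b [[y [Hy Hyb]] _]; eauto.
  - intros a Ha. destruct (HX'X a Ha) as [x [Hx Hxa]].
    destruct (HX x Hx) as [y [Hy Hxy]].
    destruct (proj1 (Hzigzag x y Hxy) a Hxa) as [b [Hyb Hab]].
    exists b; split; [split|]; eauto.
  - intros b [_ [a [Ha Hab]]]; eauto.
Qed.

Lemma team_lift_image {X : team M} {Y : team N} :
  team_lift Z X Y -> team_lift Z' (image M X) (image N Y).
Proof.
  intros [HX HY]; split.
  - intros a [x [Hx Hxa]]. destruct (HX x Hx) as [y [Hy Hxy]].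
    destruct (proj1 (Hzigzag x y Hxy) a Hxa) as [b [Hyb Hab]].
    exists b; split; [exists y|]; auto.
  - intros b [y [Hy Hyb]]. destruct (HY y Hy) as [x [Hx Hxy]].
    destruct (proj2 (Hzigzag x y Hxy) b Hyb) as [a [Hxa Hab]].
    exists a; split; [exists x|]; auto.
Qed.

End Successors.

Definition agree (P : letter -> Prop) (M : kmodel) (w : world M) (N : kmodel)
    (v : world N) : Prop :=
  forall q, P q -> (val M w q <-> val N v q).

Fixpoint kbisim (P : letter -> Prop) (k : nat) (M : kmodel) (w : world M) (N : kmodel)
    (v : world N) : Prop :=
  agree P M w N v /\
  match k with
  | 0 => True
  | S k' => team_lift (fun w' v' => kbisim P k' M w' N v') (rel M w) (rel N v)
  end.

Lemma kbisim_agree {P k M w N v} : kbisim P k M w N v -> agree P M w N v.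
Proof. destruct k; intros [H _]; exact H. Qed.

Lemma kbisim_succ {P k M N} w v :
  kbisim P (S k) M w N v ->
  team_lift (fun w' v' => kbisim P k M w' N v') (rel M w) (rel N v).
Proof. intros [_ H]; exact H. Qed.

Lemma kbisim_mono_letters (P P' : letter -> Prop) k :
  (forall q, P' q -> P q) ->
  forall M w N v, kbisim P k M w N v -> kbisim P' k M w N v.
Proof.
  intros HP; induction k as [|k IH]; intros M w N v [Hag Hsucc];
    (split; [intros q Hq; apply Hag, HP, Hq|]).
  - exact I.
  - exact (team_lift_mono (fun w' v' => IH M w' N v') Hsucc).
Qed.

Fixpoint depth (phi : form) : nat :=
  match phi with
  | FDia a | FBox a => S (depth a)
  | FAnd a b | FTensor a b | FOr a b => Nat.max (depth a) (depth b)
  | _ => 0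
  end.

Lemma sat_kbisim_invariant phi : forall P k M X N Y,
  (forall q, In q (letters phi) -> P q) -> depth phi <= k ->
  team_lift (fun x y => kbisim P k M x N y) X Y -> sat M X phi -> sat N Y phi.
Proof.
  induction phi as [q|q| | |a IHa b IHb|a IHa b IHb|a IHa b IHb|a IH|a IH];
    intros P k M X N Y HL Hd HXY Hs; simpl in *.
  - intros y Hy. destruct (proj2 HXY y Hy) as [x [Hx Hxy]].
    apply (kbisim_agree Hxy); auto.
  - intros y Hy. destruct (proj2 HXY y Hy) as [x [Hx Hxy]].
    intros Hv. apply (Hs x Hx). apply (kbisim_agree Hxy); auto.
  - intros y Hy. destruct (proj2 HXY y Hy) as [x [Hx _]]. exact (Hs x Hx).
  - destruct Hs as [x Hx]. destruct (proj1 HXY x Hx) as [y [Hy _]]. eauto.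
  - destruct Hs as [Ha Hb].
    split; [apply (IHa P k M X) | apply (IHb P k M X)]; auto; try lia;
      intros q Hq; apply HL, in_or_app; auto.
  - destruct Hs as [X1 [X2 [HX [Ha Hb]]]].
    destruct (team_lift_split HXY HX) as [Y1 [Y2 [HY [HXY1 HXY2]]]].
    exists Y1, Y2; split; [exact HY|].
    split; [apply (IHa P k M X1) | apply (IHb P k M X2)]; auto; try lia;
      intros q Hq; apply HL, in_or_app; auto.
  - destruct Hs as [Ha|Hb]; [left; apply (IHa P k M X) | right; apply (IHb P k M X)];
      auto; try lia; intros q Hq; apply HL, in_or_app; auto.
  - destruct k as [|k]; [lia|].
    destruct Hs as [X' [HXX'1 [HXX'2 Hs]]].
    destruct (team_lift_successor_team kbisim_succ HXY (conj HXX'1 HXX'2)) as [Y' [[HYY'1 HYY'2] HXY']].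
    exists Y'; split; [|split]; auto. apply (IH P k M X'); auto; lia.
  - destruct k as [|k]; [lia|].
    apply (IH P k M (image M X)); auto; [lia|].
    exact (team_lift_image kbisim_succ HXY).
Qed.

Lemma state_bisim_kbisim P M w N v :
  state_bisim P M w N v -> forall k, kbisim P k M w N v.
Proof.
  intros [Z [Hwv HZ]] k. revert w v Hwv.
  induction k as [|k IH]; intros w v Hwv; destruct (HZ w v Hwv) as [Hag Hsucc];
    (split; [exact Hag|]).
  - exact I.
  - exact (team_lift_mono IH Hsucc).
Qed.

Lemma sat_bisim_invariant phi P M X N Y :
  (forall q, In q (letters phi) -> P q) ->
  team_bisim P M X N Y -> sat M X phi -> sat N Y phi.
Proof.
  intros HL HXY. apply (sat_kbisim_invariant phi P (depth phi) M X); auto.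
  exact (team_lift_mono (fun x y H => state_bisim_kbisim P M x N y H _) HXY).
Qed.

Section Amalgam.

Variables (P : letter -> Prop) (M N : kmodel).

(* A world [(m, Some (n, j))] pairs [m] with a world [n] that is [j]-bisimilar to it: it
   takes the [P]-letters from [m] and the others from [n], and moves in both models for
   [j] more steps; afterwards it continues as a copy [(m, None)] of [M]. *)
Definition amalgam_world : Type := (world M * option (world N * nat))%type.

Definition amalgam_rel (w w' : amalgam_world) : Prop :=
  match w, w' with
  | (m, Some (n, S j)), (m', Some (n', j')) =>
      rel M m m' /\ rel N n n' /\ j' = j /\ kbisim P j M m' N n'
  | (m, Some (_, 0)), (m', None) | (m, None), (m', None) => rel M m m'
  | _, _ => False
  end.

Definition amalgam_val (w : amalgam_world) (q : letter) : Prop :=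
  match w with
  | (m, Some (n, _)) => (P q /\ val M m q) \/ (~ P q /\ val N n q)
  | (m, None) => val M m q
  end.

Definition amalgam : kmodel := KModel amalgam_world amalgam_rel amalgam_val.

Definition amalgam_coherent (w : amalgam_world) : Prop :=
  match snd w with
  | Some (n, j) => kbisim P j M (fst w) N n
  | None => True
  end.

Lemma amalgam_bisim_left (w : amalgam_world) :
  amalgam_coherent w -> state_bisim P amalgam w M (fst w).
Proof.
  intros Hw. exists (fun w m => fst w = m /\ amalgam_coherent w); split; [auto|].
  intros [m o] m0 [Hm Hk]; simpl in Hm; subst m0.
  split; [|split].
  - intros q Hq; destruct o as [[n j]|]; simpl; tauto.
  - intros [m' o'] Hr. exists m'.
    destruct o as [[n [|j]]|]; destruct o' as [[n' j']|]; simpl in *; try contradiction.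
    + repeat split; exact Hr.
    + destruct Hr as [Hmm' [_ [-> Hk']]]. repeat split; assumption.
    + repeat split; exact Hr.
  - intros m' Hmm'. destruct o as [[n [|j]]|].
    + exists (m', None); repeat split; exact Hmm'.
    + destruct (proj1 (kbisim_succ m n Hk) m' Hmm') as [n' [Hnn' Hk']].
      exists (m', Some (n', j)); repeat split; assumption.
    + exists (m', None); repeat split; exact Hmm'.
Qed.

Lemma amalgam_agree_right j m n :
  kbisim P j M m N n -> agree (fun _ => True) N n amalgam (m, Some (n, j)).
Proof.
  intros Hk q _; simpl. destruct (classic (P q)) as [Hq|Hq]; [|tauto].
  pose proof (kbisim_agree Hk q Hq). tauto.
Qed.

Lemma amalgam_kbisim_right j : forall m n,
  kbisim P j M m N n -> kbisim (fun _ => True) j N n amalgam (m, Some (n, j)).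
Proof.
  induction j as [|j IH]; intros m n Hk;
    (split; [exact (amalgam_agree_right _ _ _ Hk)|]).
  - exact I.
  - split.
    + intros n' Hnn'. destruct (proj2 (kbisim_succ m n Hk) n' Hnn') as [m' [Hmm' Hk']].
      exists (m', Some (n', j)); simpl; auto.
    + intros [m' [[n' j']|]] Hr; simpl in Hr; try contradiction.
      destruct Hr as [_ [Hnn' [-> Hk']]]. eauto.
Qed.

Lemma amalgamation k (X : team M) (Y : team N) :
  team_lift (fun x y => kbisim P k M x N y) X Y ->
  exists (K : kmodel) (Z : team K),
    team_bisim P K Z M X /\ team_lift (fun y z => kbisim (fun _ => True) k N y K z) Y Z.
Proof.
  intros [HX HY]. exists amalgam.
  exists (fun w => exists x y, w = (x, Some (y, k)) /\ X x /\ Y y /\ kbisim P k M x N y).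
  split; split.
  - intros w [x [y [-> [Hx [_ Hk]]]]]. exists x; split; [exact Hx|].
    exact (amalgam_bisim_left (x, Some (y, k)) Hk).
  - intros x Hx. destruct (HX x Hx) as [y [Hy Hk]].
    exists (x, Some (y, k)); split; [exists x, y; repeat split; assumption|].
    exact (amalgam_bisim_left (x, Some (y, k)) Hk).
  - intros y Hy. destruct (HY y Hy) as [x [Hx Hk]].
    exists (x, Some (y, k)); split; [exists x, y; repeat split; assumption|].
    exact (amalgam_kbisim_right k x y Hk).
  - intros w [x [y [-> [_ [Hy Hk]]]]]. exists y; split; [exact Hy|].
    exact (amalgam_kbisim_right k x y Hk).
Qed.

End Amalgam.

Definition singleton (M : kmodel) (w : world M) : team M := fun y => y = w.

Notation sat_at M w phi := (sat M (singleton M w) phi).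

Definition pointwise (phi : form) (Q : forall M : kmodel, world M -> Prop) : Prop :=
  forall M (X : team M), sat M X phi <-> (forall x, X x -> Q M x).

Definition flat (phi : form) : Prop := pointwise phi (fun M x => sat_at M x phi).

Lemma pointwise_sat_at {phi Q} : pointwise phi Q -> forall M w, sat_at M w phi <-> Q M w.
Proof.
  intros H M w. rewrite (H M). unfold singleton.
  split; [intros Hw; exact (Hw w eq_refl) | intros Hq y ->; exact Hq].
Qed.

Lemma pointwise_flat {phi Q} : pointwise phi Q -> flat phi.
Proof.
  intros H M X. rewrite (H M).
  split; intros HX x Hx; apply (pointwise_sat_at H); auto.
Qed.

Lemma pointwise_iff {phi Q Q'} :
  pointwise phi Q -> (forall M x, Q M x <-> Q' M x) -> pointwise phi Q'.
Proof.
  intros H HQ M X. rewrite (H M).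
  split; intros HX x Hx; apply HQ; auto.
Qed.

Lemma pointwise_atom q : pointwise (FAtom q) (fun M x => val M x q).
Proof. intros M X; reflexivity. Qed.

Lemma pointwise_natom q : pointwise (FNAtom q) (fun M x => ~ val M x q).
Proof. intros M X; reflexivity. Qed.

Lemma pointwise_and {a b Qa Qb} :
  pointwise a Qa -> pointwise b Qb -> pointwise (FAnd a b) (fun M x => Qa M x /\ Qb M x).
Proof.
  intros Ha Hb M X; simpl; rewrite (Ha M), (Hb M).
  split; [intros [HXa HXb] x Hx; auto | intros HX; split; intros x Hx; apply HX, Hx].
Qed.

Lemma pointwise_tensor {a b Qa Qb} :
  pointwise a Qa -> pointwise b Qb -> pointwise (FTensor a b) (fun M x => Qa M x \/ Qb M x).
Proof.
  intros Ha Hb M X; simpl; split.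
  - intros [X1 [X2 [HX [HX1 HX2]]]] x Hx.
    rewrite (Ha M) in HX1; rewrite (Hb M) in HX2.
    destruct (proj1 (HX x) Hx); auto.
  - intros HX. exists (fun x => X x /\ Qa M x), (fun x => X x /\ Qb M x).
    split; [|split; [apply Ha | apply Hb]; intros x [_ Hx]; exact Hx].
    intros x; split; [intros Hx; destruct (HX x Hx); auto | intros [[Hx _]|[Hx _]]; exact Hx].
Qed.

Lemma pointwise_dia {a Q} :
  pointwise a Q -> pointwise (FDia a) (fun M x => exists y, rel M x y /\ Q M y).
Proof.
  intros Ha M X; simpl; split.
  - intros [Y [HXY [HYX HY]]] x Hx. rewrite (Ha M) in HY.
    destruct (HXY x Hx) as [y [Hy Hxy]]. eauto.
  - intros HX. exists (fun y => exists x, X x /\ rel M x y /\ Q M y).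
    split; [|split].
    + intros x Hx. destruct (HX x Hx) as [y [Hxy Hy]]. eauto 6.
    + intros y [x [Hx [Hxy _]]]. eauto.
    + apply Ha. intros y [x [_ [_ Hy]]]. exact Hy.
Qed.

Lemma pointwise_box {a Q} :
  pointwise a Q -> pointwise (FBox a) (fun M x => forall y, rel M x y -> Q M y).
Proof.
  intros Ha M X; simpl; rewrite (Ha M); split.
  - intros H x Hx y Hxy. apply H. exists x; auto.
  - intros H y [x [Hx Hxy]]. exact (H x Hx y Hxy).
Qed.

Definition FTop : form := FOr FBot FNE.

Lemma pointwise_top : pointwise FTop (fun _ _ => True).
Proof.
  intros M X; simpl. split; [auto|intros _].
  destruct (classic (exists x, X x)) as [HX|HX]; [right; exact HX | left].
  intros x Hx. apply HX. eauto.
Qed.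

Fixpoint big_tensor (S : list form) : form :=
  match S with
  | [] => FBot
  | s :: S' => FTensor s (big_tensor S')
  end.

Fixpoint big_dia (S : list form) : form :=
  match S with
  | [] => FTop
  | s :: S' => FAnd (FDia s) (big_dia S')
  end.

Lemma pointwise_big_tensor S :
  (forall s, In s S -> flat s) ->
  pointwise (big_tensor S) (fun M x => exists s, In s S /\ sat_at M x s).
Proof.
  induction S as [|s S IH]; intros HS.
  - apply (pointwise_iff (Q := fun _ _ => False)); [intros M X; reflexivity|].
    intros M x; split; [intros []|intros [t [[] _]]].
  - apply (pointwise_iff (pointwise_tensor (HS s (or_introl eq_refl))
                                           (IH (fun t Ht => HS t (or_intror Ht))))).
    intros M x; simpl; split.
    + intros [Hx|[t [Ht Hx]]]; eauto.
    + intros [t [[<-|Ht] Hx]]; eauto.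
Qed.

Lemma pointwise_big_dia S :
  (forall s, In s S -> flat s) ->
  pointwise (big_dia S) (fun M x => forall s, In s S -> exists y, rel M x y /\ sat_at M y s).
Proof.
  induction S as [|s S IH]; intros HS.
  - apply (pointwise_iff pointwise_top). intros M x; split; [intros _ t []|auto].
  - apply (pointwise_iff (pointwise_and (pointwise_dia (HS s (or_introl eq_refl)))
                                        (IH (fun t Ht => HS t (or_intror Ht))))).
    intros M x; simpl; split.
    + intros [Hx HxS] t [<-|Ht]; auto.
    + intros HxS; split; auto.
Qed.

Lemma big_tensor_letters S q :
  In q (letters (big_tensor S)) -> exists s, In s S /\ In q (letters s).
Proof.
  induction S as [|s S IH]; simpl; intros Hq; [contradiction|].
  apply in_app_or in Hq as [Hq|Hq]; [eauto|].
  destruct (IH Hq) as [t [Ht Hqt]]; eauto.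
Qed.

Lemma big_dia_letters S q :
  In q (letters (big_dia S)) -> exists s, In s S /\ In q (letters s).
Proof.
  induction S as [|s S IH]; simpl; intros Hq; [contradiction|].
  apply in_app_or in Hq as [Hq|Hq]; [eauto|].
  destruct (IH Hq) as [t [Ht Hqt]]; eauto.
Qed.

Definition realizes (M : kmodel) (X : team M) (S : list form) : Prop :=
  team_lift (fun x s => sat_at M x s) X (fun s => In s S).

Lemma realizes_team_lift {M N : kmodel} {X : team M} {Y : team N} {S : list form}
    {Z : world M -> world N -> Prop} :
  (forall s x y, In s S -> sat_at M x s -> sat_at N y s -> Z x y) ->
  realizes M X S -> realizes N Y S -> team_lift Z X Y.
Proof.
  intros HZ HX HY.
  refine (team_lift_mono _ (team_lift_comp HX (team_lift_flip HY))).
  intros x y [s [Hs [Hx Hy]]]. exact (HZ s x y Hs Hx Hy).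
Qed.

Definition hintikka_step (v : form) (S : list form) : form :=
  FAnd v (FAnd (FBox (big_tensor S)) (big_dia S)).

Lemma pointwise_hintikka_step v S :
  flat v -> (forall s, In s S -> flat s) ->
  pointwise (hintikka_step v S) (fun M x => sat_at M x v /\ realizes M (rel M x) S).
Proof.
  intros Hv HS.
  exact (pointwise_and Hv (pointwise_and (pointwise_box (pointwise_big_tensor S HS))
                                         (pointwise_big_dia S HS))).
Qed.

Fixpoint team_type (T : list form) : form :=
  match T with
  | [] => FBot
  | t :: T' => FTensor (FAnd t FNE) (team_type T')
  end.

Lemma sat_team_type T :
  (forall t, In t T -> flat t) -> forall M X, sat M X (team_type T) <-> realizes M X T.
Proof.
  induction T as [|t T IH]; intros HT M X.
  - simpl. split.
    + intros HX; split; [intros x Hx; destruct (HX x Hx) | intros _ []].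
    + intros [HX _] x Hx. destruct (HX x Hx) as [t [[] _]].
  - assert (Ht : flat t) by (apply HT; left; reflexivity).
    assert (HT' : forall s, In s T -> flat s) by (intros s Hs; apply HT; right; exact Hs).
    simpl. split.
    + intros [X1 [X2 [HX [[HX1 [x1 Hx1]] HX2]]]].
      rewrite (Ht M) in HX1. apply (IH HT') in HX2 as [HX2T HTX2].
      split.
      * intros x Hx. destruct (proj1 (HX x) Hx) as [Hx'|Hx'].
        -- exists t; split; [left; reflexivity | auto].
        -- destruct (HX2T x Hx') as [s [Hs Hxs]]. exists s; split; [right|]; assumption.
      * intros s [<-|Hs].
        -- exists x1; split; [apply HX; left|]; auto.
        -- destruct (HTX2 s Hs) as [x [Hx Hxs]].
           exists x; split; [apply HX; right|]; assumption.
    + intros [HXT HTX].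
      exists (fun x => X x /\ sat_at M x t),
             (fun x => X x /\ exists s, In s T /\ sat_at M x s).
      split; [|split; [split|]].
      * intros x; split.
        -- intros Hx. destruct (HXT x Hx) as [s [[<-|Hs] Hxs]]; [left|right]; eauto.
        -- intros [[Hx _]|[Hx _]]; exact Hx.
      * apply Ht. intros x [_ Hx]; exact Hx.
      * destruct (HTX t (or_introl eq_refl)) as [x [Hx Hxt]]. exists x; split; assumption.
      * apply (IH HT'). split.
        -- intros x [_ Hx]; exact Hx.
        -- intros s Hs. destruct (HTX s (or_intror Hs)) as [x [Hx Hxs]].
           exists x; split; [split|]; eauto.
Qed.

Lemma team_type_letters T q :
  In q (letters (team_type T)) -> exists t, In t T /\ In q (letters t).
Proof.
  induction T as [|t T IH]; simpl; intros Hq; [contradiction|].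
  rewrite app_nil_r in Hq. apply in_app_or in Hq as [Hq|Hq]; [eauto|].
  destruct (IH Hq) as [s [Hs Hqs]]; eauto.
Qed.

Fixpoint big_or (L : list form) : form :=
  match L with
  | [] => FAnd FBot FNE
  | phi :: L' => FOr phi (big_or L')
  end.

Lemma sat_big_or L M X : sat M X (big_or L) <-> exists phi, In phi L /\ sat M X phi.
Proof.
  induction L as [|phi L IH]; simpl.
  - split; [intros [HX [x Hx]]; destruct (HX x Hx) | intros [psi [[] _]]].
  - rewrite IH. split.
    + intros [Hphi|[psi [Hpsi Hs]]]; eauto.
    + intros [psi [[<-|Hpsi] Hs]]; eauto.
Qed.

Fixpoint sublists {A : Type} (L : list A) : list (list A) :=
  match L with
  | [] => [[]]
  | a :: L' => map (cons a) (sublists L') ++ sublists L'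
  end.

Lemma in_sublists_incl {A : Type} {L S : list A} : In S (sublists L) -> incl S L.
Proof.
  revert S; induction L as [|a L IH]; simpl; intros S HS s Hs.
  - destruct HS as [<-|[]]; contradiction.
  - apply in_app_or in HS as [HS|HS].
    + apply in_map_iff in HS as [S' [<- HS']]. destruct Hs as [<-|Hs]; [left|right]; auto.
      exact (IH S' HS' s Hs).
    + right; exact (IH S HS s Hs).
Qed.

Lemma sublists_filter {A : Type} (L : list A) (Q : A -> Prop) :
  exists S, In S (sublists L) /\ forall a, In a S <-> In a L /\ Q a.
Proof.
  induction L as [|a L [S [HS HSQ]]].
  - exists []; simpl; split; [auto|]. intros b; split; [intros []|intros [[] _]].
  - destruct (classic (Q a)) as [Ha|Ha].
    + exists (a :: S); split.
      * simpl; apply in_or_app; left; apply in_map; exact HS.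
      * intros b; simpl; rewrite HSQ; split.
        -- intros [<-|[Hb HQb]]; auto.
        -- intros [[<-|Hb] HQb]; auto.
    + exists S; split.
      * simpl; apply in_or_app; right; exact HS.
      * intros b; simpl; rewrite HSQ; split.
        -- intros [Hb HQb]; auto.
        -- intros [[<-|Hb] HQb]; [contradiction|auto].
Qed.

Lemma realized_types M (X : team M) (L : list form) :
  (forall x, X x -> exists s, In s L /\ sat_at M x s) ->
  exists S, In S (sublists L) /\ realizes M X S.
Proof.
  intros HX.
  destruct (sublists_filter L (fun s => exists x, X x /\ sat_at M x s)) as [S [HSL HS]].
  exists S; split; [exact HSL|split].
  - intros x Hx. destruct (HX x Hx) as [s [Hs Hxs]].
    exists s; split; [apply HS; eauto|exact Hxs].
  - intros s Hs. apply HS in Hs as [_ Hs]. exact Hs.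
Qed.

Fixpoint literal_types (Ps : list letter) : list form :=
  match Ps with
  | [] => [FTop]
  | q :: Ps' =>
      map (FAnd (FAtom q)) (literal_types Ps') ++ map (FAnd (FNAtom q)) (literal_types Ps')
  end.

Lemma literal_types_flat Ps c : In c (literal_types Ps) -> flat c.
Proof.
  revert c; induction Ps as [|q Ps IH]; simpl; intros c Hc.
  - destruct Hc as [<-|[]]. exact (pointwise_flat pointwise_top).
  - apply in_app_or in Hc as [Hc|Hc]; apply in_map_iff in Hc as [c' [<- Hc']].
    + exact (pointwise_flat (pointwise_and (pointwise_atom q) (IH c' Hc'))).
    + exact (pointwise_flat (pointwise_and (pointwise_natom q) (IH c' Hc'))).
Qed.

Lemma literal_types_letters Ps c q : In c (literal_types Ps) -> In q (letters c) -> In q Ps.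
Proof.
  revert c; induction Ps as [|q0 Ps IH]; simpl; intros c Hc Hq.
  - destruct Hc as [<-|[]]; contradiction.
  - apply in_app_or in Hc as [Hc|Hc]; apply in_map_iff in Hc as [c' [<- Hc']];
      simpl in Hq; destruct Hq as [<-|Hq]; eauto.
Qed.

Lemma literal_types_exists Ps M w : exists c, In c (literal_types Ps) /\ sat_at M w c.
Proof.
  induction Ps as [|q Ps [c [Hc Hwc]]]; simpl.
  - exists FTop; split; [left; reflexivity|].
    apply (pointwise_sat_at pointwise_top); exact I.
  - destruct (classic (val M w q)) as [Hq|Hq].
    + exists (FAnd (FAtom q) c); split.
      * apply in_or_app; left; apply in_map; exact Hc.
      * split; [apply (pointwise_sat_at (pointwise_atom q)); exact Hq | exact Hwc].
    + exists (FAnd (FNAtom q) c); split.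
      * apply in_or_app; right; apply in_map; exact Hc.
      * split; [apply (pointwise_sat_at (pointwise_natom q)); exact Hq | exact Hwc].
Qed.

Lemma literal_types_agree Ps c M w N v :
  In c (literal_types Ps) -> sat_at M w c -> sat_at N v c -> agree (fun q => In q Ps) M w N v.
Proof.
  revert c; induction Ps as [|q0 Ps IH]; simpl; intros c Hc Hw Hv q Hq; [contradiction|].
  apply in_app_or in Hc as [Hc|Hc]; apply in_map_iff in Hc as [c' [<- Hc']];
    destruct Hw as [Hwq Hwc], Hv as [Hvq Hvc]; simpl in Hq;
    (destruct Hq as [<-|Hq]; [|exact (IH c' Hc' Hwc Hvc q Hq)]).
  - rewrite (pointwise_sat_at (pointwise_atom q0)) in Hwq, Hvq. tauto.
  - rewrite (pointwise_sat_at (pointwise_natom q0)) in Hwq, Hvq. tauto.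
Qed.

Fixpoint hintikka (Ps : list letter) (k : nat) : list form :=
  match k with
  | 0 => literal_types Ps
  | S k' =>
      flat_map (fun v => map (hintikka_step v) (sublists (hintikka Ps k'))) (literal_types Ps)
  end.

Lemma in_hintikka_succ Ps k c :
  In c (hintikka Ps (S k)) <->
  exists v S, c = hintikka_step v S /\ In v (literal_types Ps) /\
              In S (sublists (hintikka Ps k)).
Proof.
  simpl; rewrite in_flat_map. split.
  - intros [v [Hv Hc]]. apply in_map_iff in Hc as [S [<- HS]]. eauto.
  - intros [v [S [-> [Hv HS]]]]. exists v; split; [exact Hv|]. apply in_map; exact HS.
Qed.

Lemma hintikka_flat Ps k c : In c (hintikka Ps k) -> flat c.
Proof.
  revert c; induction k as [|k IH]; intros c Hc.
  - exact (literal_types_flat Ps c Hc).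
  - apply in_hintikka_succ in Hc as [v [S [-> [Hv HS]]]].
    exact (pointwise_flat (pointwise_hintikka_step v S (literal_types_flat Ps v Hv)
                                                   (fun s Hs => IH s (in_sublists_incl HS s Hs)))).
Qed.

Lemma hintikka_letters Ps k c q : In c (hintikka Ps k) -> In q (letters c) -> In q Ps.
Proof.
  revert c; induction k as [|k IH]; intros c Hc Hq.
  - exact (literal_types_letters Ps c q Hc Hq).
  - apply in_hintikka_succ in Hc as [v [S [-> [Hv HS]]]].
    unfold hintikka_step in Hq; simpl in Hq.
    apply in_app_or in Hq as [Hq|Hq]; [exact (literal_types_letters Ps v q Hv Hq)|].
    assert (HSq : exists s, In s S /\ In q (letters s)).
    { apply in_app_or in Hq as [Hq|Hq];
        [exact (big_tensor_letters S q Hq) | exact (big_dia_letters S q Hq)]. }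
    destruct HSq as [s [Hs Hqs]]. exact (IH s (in_sublists_incl HS s Hs) Hqs).
Qed.

Lemma sat_hintikka_step Ps k v S M w :
  In v (literal_types Ps) -> In S (sublists (hintikka Ps k)) ->
  sat_at M w (hintikka_step v S) <-> sat_at M w v /\ realizes M (rel M w) S.
Proof.
  intros Hv HS. apply (pointwise_sat_at (pointwise_hintikka_step v S
    (literal_types_flat Ps v Hv) (fun s Hs => hintikka_flat Ps k s (in_sublists_incl HS s Hs)))).
Qed.

Lemma hintikka_exists Ps k M w : exists c, In c (hintikka Ps k) /\ sat_at M w c.
Proof.
  revert w; induction k as [|k IH]; intros w.
  - exact (literal_types_exists Ps M w).
  - destruct (literal_types_exists Ps M w) as [v [Hv Hwv]].
    destruct (realized_types M (rel M w) (hintikka Ps k) (fun y _ => IH y)) as [S [HS HwS]].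
    exists (hintikka_step v S); split.
    + apply in_hintikka_succ. exists v, S; auto.
    + apply (sat_hintikka_step Ps k); auto.
Qed.

Lemma hintikka_kbisim Ps k c M w N v :
  In c (hintikka Ps k) -> sat_at M w c -> sat_at N v c ->
  kbisim (fun q => In q Ps) k M w N v.
Proof.
  revert c w v; induction k as [|k IH]; intros c w v Hc Hw Hv.
  - exact (conj (literal_types_agree Ps c M w N v Hc Hw Hv) I).
  - apply in_hintikka_succ in Hc as [u [S [-> [Hu HS]]]].
    apply (sat_hintikka_step Ps k u S M w Hu HS) in Hw as [Hwu HwS].
    apply (sat_hintikka_step Ps k u S N v Hu HS) in Hv as [Hvu HvS].
    split; [exact (literal_types_agree Ps u M w N v Hu Hwu Hvu)|].
    exact (realizes_team_lift (fun s x y Hs => IH s x y (in_sublists_incl HS s Hs)) HwS HvS).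
Qed.
Lemma team_type_hintikka_letters Ps k T q :
  In T (sublists (hintikka Ps k)) -> In q (letters (team_type T)) -> In q Ps.
Proof.
  intros HT Hq. destruct (team_type_letters T q Hq) as [t [Ht Hqt]].
  exact (hintikka_letters Ps k t q (in_sublists_incl HT t Ht) Hqt).
Qed.

Lemma sat_team_type_hintikka Ps k T M X :
  In T (sublists (hintikka Ps k)) -> sat M X (team_type T) <-> realizes M X T.
Proof.
  intros HT. apply sat_team_type.
  intros t Ht. exact (hintikka_flat Ps k t (in_sublists_incl HT t Ht)).
Qed.

Lemma team_type_realized Ps k M (X : team M) :
  exists T, In T (sublists (hintikka Ps k)) /\ sat M X (team_type T).
Proof.
  destruct (realized_types M X (hintikka Ps k) (fun x _ => hintikka_exists Ps k M x))
    as [T [HT HXT]].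
  exists T; split; [exact HT|]. apply (sat_team_type_hintikka Ps k); assumption.
Qed.

Lemma team_type_kbisim Ps k T M X N Y :
  In T (sublists (hintikka Ps k)) -> sat M X (team_type T) -> sat N Y (team_type T) ->
  team_lift (fun x y => kbisim (fun q => In q Ps) k M x N y) X Y.
Proof.
  intros HT HX HY.
  rewrite (sat_team_type_hintikka Ps k) in HX, HY by exact HT.
  refine (realizes_team_lift _ HX HY). intros t x y Ht.
  exact (hintikka_kbisim Ps k t M x N y (in_sublists_incl HT t Ht)).
Qed.

Theorem mainTheorem9 :
  forall (phi : form) (p : letter),
  exists theta : form,
    forall (M : kmodel) (X : team M),
      sat M X theta <->
      exists (N : kmodel) (Y : team N),
        team_bisim (fun q => In q (letters phi) /\ q <> p) N Y M X /\
        sat N Y phi.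
Proof.
  intros phi p.
  set (P := fun q => In q (letters phi) /\ q <> p).
  set (Ps := filter (fun q => negb (Nat.eqb q p)) (letters phi)).
  assert (HPs : forall q, In q Ps <-> P q).
  { intros q. unfold Ps, P. rewrite filter_In, Bool.negb_true_iff, Nat.eqb_neq. tauto. }
  destruct (sublists_filter (sublists (hintikka Ps (depth phi)))
              (fun T => exists N Y, sat N Y (team_type T) /\ sat N Y phi)) as [G [_ HG]].
  exists (big_or (map team_type G)). intros M X. rewrite sat_big_or. split.
  - intros [theta [Htheta HX]]. apply in_map_iff in Htheta as [T [<- HT]].
    apply HG in HT as [HT [N [Y [HY Hphi]]]].
    destruct (amalgamation P M N (depth phi) X Y) as [K [Z [HZX HYZ]]].
    { refine (team_lift_mono _ (team_type_kbisim Ps _ T M X N Y HT HX HY)).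
      intros x y. apply kbisim_mono_letters. intros q; apply HPs. }
    exists K, Z; split; [exact HZX|].
    exact (sat_kbisim_invariant phi _ _ N Y K Z (fun _ _ => I) (le_n _) HYZ Hphi).
  - intros [N [Y [HYX Hphi]]].
    destruct (team_type_realized Ps (depth phi) N Y) as [T [HT HYT]].
    exists (team_type T); split.
    + apply in_map, HG. split; [exact HT|]. exists N, Y; split; assumption.
    + refine (sat_bisim_invariant _ P N Y M X _ HYX HYT).
      intros q Hq. apply HPs. exact (team_type_hintikka_letters Ps _ T q HT Hq).
Qed.
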